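(* Let $v>3$ and let $(X,\mathcal{B})$ be an STS$(v)$ with $X=\{1,\dots,v\}$. Then there is a sequencing $\pi=[x_1\,x_2\,\cdots\,x_v]$ of $X$ that is $3$-good for $(X,\mathcal{B})$, i.e. $\{x_i,x_{i+1},x_{i+2}\}\notin\mathcal{B}$ for all $1\le i\le v-2$.
   Context: A Steiner triple system of order $v$, STS$(v)$, is a pair $(X,\mathcal{B})$ where $X$ is a set of $v$ points and $\mathcal{B}$ is a set of 3-subsets of $X$ (blocks) such that every pair of distinct points lies in exactly one block. A sequencing of $X$ is an ordering $[x_1\,x_2\,\cdots\,x_v]$ of all points of $X$, each appearing exactly once. It is $3$-good if no three consecutive points form a block. *)

From mathcomp Require Import all_boot.
Set Implicit Arguments. Unset Strict Implicit. Unset Printing Implicit Defensive.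

(* Points of X = {1,...,v} are represented by 'I_v = {0,...,v-1}. *)

Definition is_STS (v : nat) (B : {set {set 'I_v}}) : Prop :=
  (forall b, b \in B -> #|b| = 3) /\
  (forall x y : 'I_v, x != y ->
     #|[set b in B | (x \in b) && (y \in b)]| = 1).

Definition is_sequencing (v : nat) (s : seq 'I_v) : Prop :=
  perm_eq s (enum 'I_v).

Definition three_good (v : nat) (B : {set {set 'I_v}}) (s : seq 'I_v) : Prop :=
  forall (x0 : 'I_v) (i : nat), i + 2 < size s ->
    [set nth x0 s i; nth x0 s i.+1; nth x0 s i.+2] \notin B.

From mathcomp Require Import all_boot.

Set Implicit Arguments. Unset Strict Implicit. Unset Printing Implicit Defensive.

(* Build the sequencing greedily.  Two blocks sharing two points coincide, so
   for fixed distinct a, b at most one point x makes {a, b, x} a block, and in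
   a 4-set T at most one x makes T \ x a block.  Hence, with a, b the last two
   points placed and S the set of remaining points, some x in S keeps
   {a, b, x} off B while preserving the invariant that a+b+S, b+S and S are
   not blocks.  By cardinality the invariant only bites when |S| <= 3, and
   there it is exactly what guarantees a choice in the last steps. *)

Lemma three_good_small v (B : {set {set 'I_v}}) (s : seq 'I_v) :
  size s <= 2 -> three_good B s.
Proof. by move=> s_le2 x0 i; rewrite ltnNge (leq_trans s_le2) ?leq_addl. Qed.

Lemma three_good_cons3 v (B : {set {set 'I_v}}) (a b c : 'I_v) s :
  [set a; b; c] \notin B -> three_good B [:: b, c & s] ->
  three_good B [:: a, b, c & s].
Proof. by move=> abc_notB good x0 [|i] //; apply: good. Qed.

Lemma exists_avoid1 (T : finType) (S : {set T}) (P : pred T) : 1 < #|S| ->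
  {in S &, forall x y, P x -> P y -> x = y} -> exists2 x, x \in S & ~~ P x.
Proof.
move=> S_gt1 P_uniq.
have [/exists_inP [x xS nPx] | /exists_inPn allP] := boolP [exists x in S, ~~ P x].
  by exists x.
suff : #|S| <= 1 by rewrite leqNgt S_gt1.
apply/card_le1_eqP => x y xS yS.
by apply: P_uniq => //; apply/negbNE; [exact: allP | exact: allP].
Qed.

Lemma exists_avoid2 (T : finType) (S : {set T}) (P Q : pred T) : 2 < #|S| ->
  {in S &, forall x y, P x -> P y -> x = y} ->
  {in S &, forall x y, Q x -> Q y -> x = y} ->
  exists2 x, x \in S & ~~ P x && ~~ Q x.
Proof.
move=> S_gt2 P_uniq Q_uniq.
have [/exists_inP [p pS Pp] | /exists_inPn nP] := boolP [exists x in S, P x].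
  have [x /setD1P [xp xS] nQx] : exists2 x, x \in S :\ p & ~~ Q x.
    apply: exists_avoid1; first by move: S_gt2; rewrite (cardsD1 p) pS.
    by move=> x y /setD1P [_ xS] /setD1P [_ yS]; apply: Q_uniq.
  exists x; rewrite // nQx andbT.
  by apply: contra xp => Px; rewrite (P_uniq x p).
have [x xS nQx] : exists2 x, x \in S & ~~ Q x.
  by apply: exists_avoid1 => //; apply: ltnW.
by exists x; rewrite // nQx nP.
Qed.

Section SteinerTripleSystem.

Variables (v : nat) (B : {set {set 'I_v}}).
Hypothesis sts : is_STS B.

Lemma card_sts_block (t : {set 'I_v}) : t \in B -> #|t| = 3.
Proof. exact: sts.1. Qed.

Lemma sts_notin_card (t : {set 'I_v}) : #|t| != 3 -> t \notin B.
Proof. by apply: contra => /card_sts_block ->. Qed.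

Lemma sts_block_eq (b1 b2 : {set 'I_v}) (p q : 'I_v) :
  b1 \in B -> b2 \in B -> p != q ->
  p \in b1 -> q \in b1 -> p \in b2 -> q \in b2 -> b1 = b2.
Proof.
move=> b1B b2B pq p1 q1 p2 q2.
have /cards1P [c pq_blocks] : #|[set b in B | (p \in b) && (q \in b)]| == 1.
  by rewrite sts.2.
have : b1 \in [set b in B | (p \in b) && (q \in b)] by rewrite inE b1B p1 q1.
have : b2 \in [set b in B | (p \in b) && (q \in b)] by rewrite inE b2B p2 q2.
by rewrite pq_blocks !inE => /eqP -> /eqP ->.
Qed.

Lemma sts_third_point_uniq (a b : 'I_v) (S : {set 'I_v}) :
  a != b -> a \notin S -> b \notin S ->
  {in S &, forall x y, [set a; b; x] \in B -> [set a; b; y] \in B -> x = y}.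
Proof.
move=> ab aS bS x y xS yS abxB abyB.
have abx_aby : [set a; b; x] = [set a; b; y].
  by apply: (sts_block_eq abxB abyB ab); rewrite !inE eqxx ?orbT.
have : x \in [set a; b; y] by rewrite -abx_aby !inE eqxx !orbT.
rewrite !inE => /orP [/orP [/eqP xa | /eqP xb] | /eqP //].
- by rewrite -xa xS in aS.
- by rewrite -xb xS in bS.
Qed.

Lemma sts_setD1_uniq (T : {set 'I_v}) :
  {in T &, forall x y, T :\ x \in B -> T :\ y \in B -> x = y}.
Proof.
move=> x y xT yT TxB TyB; apply/eqP/negPn/negP => xy.
have yTx : y \in T :\ x by rewrite !inE eq_sym xy.
have : 1 < #|T :\ x :\ y|.
  by move: (card_sts_block TxB); rewrite (cardsD1 y (T :\ x)) yTx add1n => -[->].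
case/card_gt1P => [z [w [zTxy wTxy zw]]].
move: zTxy wTxy; rewrite !inE => /and3P [zy zx zT] /and3P [wy wx wT].
have Tx_Ty : T :\ x = T :\ y.
  by apply: (sts_block_eq TxB TyB zw); rewrite !inE ?zy ?zx ?zT ?wy ?wx ?wT.
by move: yTx; rewrite Tx_Ty !inE eqxx.
Qed.

Lemma exists_nonblock_setD1 (T : {set 'I_v}) :
  1 < #|T| -> exists2 x, x \in T & T :\ x \notin B.
Proof. by move=> T_gt1; apply: exists_avoid1 T_gt1 (@sts_setD1_uniq T). Qed.

Lemma sts_next_point (a b : 'I_v) (S : {set 'I_v}) :
  a != b -> a \notin S -> b \notin S -> a |: (b |: S) \notin B -> S != set0 ->
  exists2 x, x \in S & ([set a; b; x] \notin B) && (S :\ x \notin B).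
Proof.
move=> ab aS bS abS_notB; rewrite -card_gt0.
have third_uniq := sts_third_point_uniq ab aS bS.
case cS : #|S| => [|[|[|n]]] // _.
- have /cards1P [c S_c] : #|S| == 1 by rewrite cS.
  exists c; first by rewrite S_c set11.
  by rewrite S_c setDv sts_notin_card ?cards0 // andbT -S_c -setUA.
- have [|x xS abx_notB] := exists_avoid1 _ third_uniq; first by rewrite cS.
  exists x; rewrite // abx_notB sts_notin_card //.
  by move: cS; rewrite (cardsD1 x S) xS add1n => -[->].
- by apply: exists_avoid2 third_uniq (@sts_setD1_uniq S); rewrite cS.
Qed.

Lemma sts_extend (S : {set 'I_v}) (a b : 'I_v) :
  a != b -> a \notin S -> b \notin S ->
  a |: (b |: S) \notin B -> b |: S \notin B -> S \notin B ->
  exists s, [/\ uniq s, s =i S & three_good B [:: a, b & s]].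
Proof.
move eq_n : #|S| => n; elim: n S a b eq_n => [|n IH] S a b cS ab aS bS
  abS_notB bS_notB S_notB.
  exists [::]; split=> //; last exact: three_good_small.
  by move: cS => /eqP; rewrite cards_eq0 => /eqP -> y; rewrite inE.
have [x xS /andP [abx_notB Sx_notB]] : exists2 x, x \in S &
    ([set a; b; x] \notin B) && (S :\ x \notin B).
  by apply: sts_next_point; rewrite // -card_gt0 cS.
have bx : b != x by apply: contraNneq bS => ->.
have [s [uniq_s s_Sx good]] : exists s,
    [/\ uniq s, s =i S :\ x & three_good B [:: b, x & s]].
  apply: IH; rewrite ?setD1K ?inE ?eqxx ?(negbTE bS) ?andbF //.
  by move: cS; rewrite (cardsD1 x S) xS add1n => -[].
exists (x :: s); split; first by rewrite /= uniq_s s_Sx !inE eqxx.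
  by move=> y; rewrite inE s_Sx !inE; case: eqP => // ->.
exact: three_good_cons3.
Qed.

End SteinerTripleSystem.

Theorem theorem1 (v : nat) (B : {set {set 'I_v}}) :
  3 < v -> is_STS B ->
  exists s : seq 'I_v, is_sequencing s /\ three_good B s.
Proof.
move=> v_gt3 sts.
have cT : #|[set: 'I_v]| = v by rewrite cardsT card_ord.
have [|a _ Ta_notB] := exists_nonblock_setD1 sts (T := [set: 'I_v]).
  by rewrite cT (ltn_trans _ v_gt3).
have [|b bTa Tab_notB] := exists_nonblock_setD1 sts (T := [set: 'I_v] :\ a).
  by move: v_gt3; rewrite -[v in _ < v]cT (cardsD1 a) inE add1n ltnS => /ltnW.
have ba : b != a by move: bTa; rewrite !inE => /andP [].
have [s [uniq_s s_Tab good]] : exists s,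
    [/\ uniq s, s =i [set: 'I_v] :\ a :\ b & three_good B [:: a, b & s]].
  apply: sts_extend; rewrite 1?eq_sym ?setD1K ?inE ?eqxx ?ba ?andbF //.
  by rewrite sts_notin_card // cT neq_ltn v_gt3 orbT.
exists [:: a, b & s]; split=> //.
apply: uniq_perm; [|exact: enum_uniq|].
  by rewrite /= !inE !s_Tab !inE (eq_sym a b) (negbTE ba) !eqxx andbF uniq_s.
by move=> y; rewrite mem_enum !inE s_Tab !inE; case: eqP; case: eqP.
Qed.
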